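(* The bialgebra $U_{K,L,norm}$ (with $\Delta,\varepsilon$ as in the context) admits no linear map $\mathsf{S}:U_{K,L,norm}\to U_{K,L,norm}$ satisfying $\mathsf{S}\star\mathsf{id}=\mathsf{id}\star\mathsf{S}=\eta\circ\varepsilon$.
   Context: Fix $q\in\mathbb{C}$, $q\neq 0,\pm1$. $U_{K,L,norm}$ is the unital associative $\mathbb{C}$-algebra generated by $K,\overline{K},L,\overline{L},E,F$ subject to $K\overline{K}K=K$, $\overline{K}K\overline{K}=\overline{K}$, $K\overline{K}=\overline{K}K$, $L\overline{L}L=L$, $\overline{L}L\overline{L}=\overline{L}$, $L\overline{L}=\overline{L}L$, $K\overline{K}+L\overline{L}=\mathbf{1}$, $KE=q^2EK$, $LE=q^2EL$, $\overline{K}E=q^{-2}E\overline{K}$, $\overline{L}E=q^{-2}E\overline{L}$, $KF=q^{-2}FK$, $LF=q^{-2}FL$, $\overline{K}F=q^2F\overline{K}$, $\overline{L}F=q^2F\overline{L}$, $EF-FE=\frac{(K+L)-(\overline{K}+\overline{L})}{q-q^{-1}}$. It is a bialgebra with the algebra homomorphisms $\Delta:U\to U\otimes U$, $\varepsilon:U\to\mathbb{C}$ determined by $\Delta(K)=K\otimes K$, $\Delta(\overline{K})=\overline{K}\otimes\overline{K}$, $\Delta(L)=L\otimes L+L\otimes K+K\otimes L$, $\Delta(\overline{L})=\overline{L}\otimes\overline{L}+\overline{L}\otimes\overline{K}+\overline{K}\otimes\overline{L}$, $\Delta(E)=\mathbf{1}\otimes E+E\otimes(K+L)$, $\Delta(F)=F\otimes\mathbf{1}+(\overline{K}+\overline{L})\otimes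 F$, $\varepsilon(K)=\varepsilon(\overline{K})=1$, $\varepsilon(L)=\varepsilon(\overline{L})=\varepsilon(E)=\varepsilon(F)=0$. For linear maps $A,B$ of $U$, the convolution is $A\star B=\mu\circ(A\otimes B)\circ\Delta$, where $\mu$ is the multiplication; $\eta:\mathbb{C}\to U$ is the unit map $\lambda\mapsto\lambda\mathbf{1}$. *)

From HB Require Import structures.
From mathcomp Require Import all_boot all_order all_algebra.
Set Implicit Arguments. Unset Strict Implicit. Unset Printing Implicit Defensive.
Import Order.TTheory GRing.Theory Num.Theory.
Local Open Scope ring_scope.

Definition lin_map (C : fieldType) (V W : lmodType C) (f : V -> W) : Prop :=
  forall (a : C) (x y : V), f (a *: x + y) = a *: f x + f y.

Definition bilin_map (C : fieldType) (V W : lmodType C) (f : V -> V -> W) : Prop :=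
  (forall b, lin_map (fun a => f a b)) /\ (forall a, lin_map (f a)).

Definition alg_hom (C : fieldType) (A B : lalgType C) (f : A -> B) : Prop :=
  [/\ lin_map f, f 1 = 1 & forall x y, f (x * y) = f x * f y].

(* The defining relations of U_{K,L,norm}, for elements K, Kb (= \overline K),
   L, Lb (= \overline L), E, Fg (= F) of a C-algebra A. *)
Definition UKL_rels (C : fieldType) (q : C) (A : lalgType C)
    (K Kb L Lb E Fg : A) : Prop :=
  [/\ K * Kb * K = K, Kb * K * Kb = Kb & K * Kb = Kb * K] /\
  [/\ L * Lb * L = L, Lb * L * Lb = Lb & L * Lb = Lb * L] /\
  K * Kb + L * Lb = 1 /\
  [/\ K * E = q ^+ 2 *: (E * K), L * E = q ^+ 2 *: (E * L),
      Kb * E = q ^- 2 *: (E * Kb) & Lb * E = q ^- 2 *: (E * Lb)] /\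
  [/\ K * Fg = q ^- 2 *: (Fg * K), L * Fg = q ^- 2 *: (Fg * L),
      Kb * Fg = q ^+ 2 *: (Fg * Kb) & Lb * Fg = q ^+ 2 *: (Fg * Lb)] /\
  E * Fg - Fg * E = (q - q^-1)^-1 *: ((K + L) - (Kb + Lb)).

(* U (with the given six elements) is the unital associative C-algebra
   presented by these generators and relations: the relations hold in U and
   U is initial among C-algebras with six elements satisfying them. *)
Definition is_UKLnorm (C : fieldType) (q : C) (U : algType C)
    (K Kb L Lb E Fg : U) : Prop :=
  UKL_rels q K Kb L Lb E Fg /\
  forall (A : algType C) (K' Kb' L' Lb' E' Fg' : A),
    UKL_rels q K' Kb' L' Lb' E' Fg' ->
    exists! phi : U -> A,
      alg_hom phi /\
      [/\ phi K = K', phi Kb = Kb' & phi L = L'] /\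
      [/\ phi Lb = Lb', phi E = E' & phi Fg = Fg'].

(* (T, tens) is the tensor product U (x)_C U (universal bilinear map). *)
Definition is_tensor_square (C : fieldType) (U T : lmodType C)
    (tens : U -> U -> T) : Prop :=
  bilin_map tens /\
  forall (V : lmodType C) (f : U -> U -> V), bilin_map f ->
    exists! g : T -> V, lin_map g /\ forall a b, g (tens a b) = f a b.

Definition tensor_alg (C : fieldType) (U T : algType C)
    (tens : U -> U -> T) : Prop :=
  tens 1 1 = 1 /\ forall a b c d, tens a b * tens c d = tens (a * c) (b * d).

(* Convolution: A * B = Cm, where A * B = mu o (A (x) B) o Delta, and
   mu o (A (x) B) is the (unique) linear map T -> U sending a (x) b to A a * B b. *)
Definition convolution_eq (C : fieldType) (U T : algType C)
    (tens : U -> U -> T) (Delta : U -> T) (A B Cm : U -> U) : Prop :=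
  exists m : T -> U,
    [/\ lin_map m, forall a b, m (tens a b) = A a * B b
      & forall x, m (Delta x) = Cm x].

From HB Require Import structures.
From mathcomp Require Import all_boot all_order all_algebra.
Set Implicit Arguments. Unset Strict Implicit. Unset Printing Implicit Defensive.
Import Order.TTheory GRing.Theory Num.Theory.
Local Open Scope ring_scope.

(* K is group-like: Delta K = K (x) K and eps K = 1.  If S were
   an antipode, the identity S * id = eta o eps evaluated at K would give
   S(K) K = 1, i.e. K would have a left inverse in U_{K,L,norm}.  But the
   relations admit the one-dimensional representation
     K, Kb |-> 0,   L, Lb |-> 1,   E, F |-> 0
   on the ground field (it is the "L-part" of the decomposition
   1 = K Kb + L Lb), so by the universal property there is a unital algebra
   homomorphism U -> C killing K; a unital homomorphism into a nonzero ring
   cannot kill a left-invertible element. *)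

Lemma convolution_grouplike (C : fieldType) (U T : algType C)
    (tens : U -> U -> T) (Delta : U -> T) (S : U -> U) (eps : U -> C) (g : U) :
  convolution_eq tens Delta S id (fun x => eps x *: (1 : U)) ->
  Delta g = tens g g -> S g * g = eps g *: 1.
Proof. by case=> m [_ m_tens m_Delta] Dg; rewrite -m_tens -Dg m_Delta. Qed.

Lemma alg_hom_left_unit_neq0 (C : fieldType) (A B : lalgType C) (phi : A -> B)
    (a b : A) :
  alg_hom phi -> b * a = 1 -> phi a != 0.
Proof.
case=> _ phi1 phiM ba1; apply: contra_neq (oner_neq0 B) => phia0.
by rewrite -phi1 -ba1 phiM phia0 mulr0.
Qed.

Lemma UKL_rels_L_character (C : fieldType) (q : C) :
  UKL_rels q (0 : C^o) 0 1 1 0 0.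
Proof.
split; first by rewrite !mulr0.
split; first by rewrite !mulr1.
split; first by rewrite mulr0 add0r mulr1.
split; first by rewrite !(mulr0, mul0r, scaler0).
split; first by rewrite !(mulr0, mul0r, scaler0).
by rewrite !(mulr0, mul0r, add0r, subrr, scaler0).
Qed.

Lemma UKLnorm_K_not_left_invertible (C : fieldType) (q : C) (U : algType C)
    (K Kb L Lb E Fg : U) (b : U) :
  is_UKLnorm q K Kb L Lb E Fg -> b * K != 1.
Proof.
case=> _ /(_ _ _ _ _ _ _ _ (UKL_rels_L_character q)).
case=> phi [[phi_hom [[phiK _ _] _]] _].
by apply/eqP => /(alg_hom_left_unit_neq0 phi_hom); rewrite phiK eqxx.
Qed.

Theorem proposition8 (C : numClosedFieldType) (q : C)
    (hq0 : q != 0) (hq1 : q != 1) (hqm1 : q != -1)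
    (U : algType C) (K Kb L Lb E Fg : U)
    (hU : is_UKLnorm q K Kb L Lb E Fg)
    (T : algType C) (tens : U -> U -> T)
    (hT : is_tensor_square tens) (hTalg : tensor_alg tens)
    (Delta : U -> T) (hD : alg_hom Delta)
    (hDK : Delta K = tens K K) (hDKb : Delta Kb = tens Kb Kb)
    (hDL : Delta L = tens L L + tens L K + tens K L)
    (hDLb : Delta Lb = tens Lb Lb + tens Lb Kb + tens Kb Lb)
    (hDE : Delta E = tens 1 E + tens E (K + L))
    (hDF : Delta Fg = tens Fg 1 + tens (Kb + Lb) Fg)
    (eps : U -> C^o) (he : alg_hom eps)
    (heK : eps K = 1) (heKb : eps Kb = 1) (heL : eps L = 0)
    (heLb : eps Lb = 0) (heE : eps E = 0) (heF : eps Fg = 0) :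
  ~ exists S : U -> U,
      [/\ lin_map S,
          convolution_eq tens Delta S id (fun x => eps x *: (1 : U))
        & convolution_eq tens Delta id S (fun x => eps x *: (1 : U))].
Proof.
case=> S [_ S_left_inverse _].
have SK_K : S K * K = 1.
  by rewrite (convolution_grouplike S_left_inverse hDK) heK scale1r.
by move: (UKLnorm_K_not_left_invertible (S K) hU); rewrite SK_K eqxx.
Qed.
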